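(* Let $\alpha,\beta,\gamma\in I_{d,n}$, let $R_\alpha=\alpha\setminus\beta$, $S_\alpha=\beta\setminus\alpha$, $R_\gamma=\gamma\setminus\beta$, $S_\gamma=\beta\setminus\gamma$. For a finite multiset $U$ on $\overline\beta\times\beta$ let $x_U=\prod_{(i,j)\in U}x_{ij}$ (with multiplicity). Then $x_U$ does not lie in the ideal $\mathrm{in}\,G_{\alpha,\beta}^\gamma$ if and only if every chain $C$ contained in the underlying set of $U$ satisfies $$R_\alpha-S_\alpha\le C_{(1)}-C_{(2)}\le R_\gamma-S_\gamma .$$ Consequently, $U\mapsto x_U$ is a bijection from the degree-$m$ multisets on $\overline\beta\times\beta$ with this property onto the degree-$m$ monomials of $K[\mathcal{O}_\beta]$ not in $\mathrm{in}\,G_{\alpha,\beta}^\gamma$.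
   Context: $I_{d,n}$ = $d$-subsets of $\{1,\dots,n\}$, ordered by $\alpha\le\theta$ iff $\alpha_i\le\theta_i$ for all $i$ (entries sorted); $\overline\beta=\{1,\dots,n\}\setminus\beta$. $K[\mathcal{O}_\beta]=K[x_{ij}: i\in\overline\beta, j\in\beta]$ is the coordinate ring of the open cell $\{p_\beta\ne0\}$ of $Gr_{d,n}$, identified with $n\times d$ matrices having the identity in rows $\beta$ and free entries $x_{ij}$ in rows $\overline\beta$. $f_{\theta,\beta}=p_\theta/p_\beta$ is $\pm$ the minor of $(x_{ij})$ with rows $\theta\setminus\beta$ and columns $\beta\setminus\theta$. $G_{\alpha,\beta}^\gamma=\{f_{\theta,\beta}\mid\alpha\not\le\theta\text{ or }\theta\not\le\gamma\}$, and $\mathrm{in}\,G_{\alpha,\beta}^\gamma$ is the ideal generated by the initial terms, where the monomial order is chosen so that $\mathrm{in}(f_{\theta,\beta})=x_{r_1s_k}x_{r_2s_{k-1}}\cdots x_{r_ks_1}$ for $\theta\setminus\beta=\{r_1<\dots<r_k\}$, $\beta\setminus\theta=\{s_1<\dots<s_k\}$. A chain is a subset $\{(e_1,f_1),\dots,(e_m,f_m)\}$ ($m\ge0$) of $\mathbb{N}^2$ with $e_1<\dots<e_m$ and $f_1>\dots>f_m$; $C_{(1)},C_{(2)}$ are its sets of first and second coordinates. For finite multisets $A,B,C,D$ of integers with $|A|+|D|=|B|+|C|$, ''$A-C\le B-D$'' means $A\sqcup D\le B\sqcup C$ in the termwise order (the sorted entries compared pointwise). *)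

From HB Require Import structures.
From mathcomp Require Import all_boot all_order all_algebra.
From mathcomp Require Import mpoly.
Set Implicit Arguments. Unset Strict Implicit. Unset Printing Implicit Defensive.
Import GRing.Theory.
Local Open Scope ring_scope.

(* Indices {1..n} are represented by 'I_n (i.e. {0..n-1}); all orders and
   multiset comparisons used below are invariant under this shift. *)

Definition sorted_entries n (A : {set 'I_n}) : seq nat :=
  sort leq [seq val i | i <- enum A].

Definition ms_le (s t : seq nat) : bool :=
  (size s == size t) &&
  [forall k : 'I_(size s), nth 0%N (sort leq s) k <= nth 0%N (sort leq t) k]%N.

Definition sub_le n (A B : {set 'I_n}) : bool :=
  ms_le (sorted_entries A) (sorted_entries B).

Definition cellP n (beta : {set 'I_n}) : {set 'I_n * 'I_n} :=
  [set p | (p.1 \notin beta) && (p.2 \in beta)].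

(* coordinate ring K[O_beta] : polynomial ring in the variables x_ij,
   (i,j) in (complement beta) x beta, enumerated via enum of cellP beta *)
Definition cellRing (K : fieldType) n (beta : {set 'I_n}) :=
  {mpoly K[#|cellP beta|]}.

(* the variable x_ij (0 if (i,j) is not in (complement beta) x beta) *)
Definition xvar (K : fieldType) n (beta : {set 'I_n}) (p : 'I_n * 'I_n)
  : cellRing K beta :=
  \sum_(i < #|cellP beta| | @enum_val _ (mem (cellP beta)) i == p) 'X_i.

Definition xU (K : fieldType) n (beta : {set 'I_n}) (U : seq ('I_n * 'I_n))
  : cellRing K beta :=
  \prod_(p <- U) xvar K beta p.

(* in(f_{theta,beta}) = x_{r_1 s_k} x_{r_2 s_{k-1}} ... x_{r_k s_1} *)
Definition in_f (K : fieldType) n (theta beta : {set 'I_n}) : cellRing K beta :=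
  let r := sorted_entries (theta :\: beta) in
  let s := sorted_entries (beta :\: theta) in
  let k := size r in
  \prod_(i < k) \sum_(p : 'I_n * 'I_n |
        (val p.1 == nth 0%N r i) && (val p.2 == nth 0%N s (k.-1 - i)))
        xvar K beta p.

Definition in_ideal (R : comNzRingType) (S : R -> Prop) (f : R) : Prop :=
  exists (gs cs : seq R), size gs = size cs /\ (forall g, g \in gs -> S g) /\
    f = \sum_(i < size gs) cs`_i * gs`_i.

Definition inG_gen (K : fieldType) n d (alpha beta gamma : {set 'I_n})
  (g : cellRing K beta) : Prop :=
  exists theta : {set 'I_n}, #|theta| = d /\
    (~~ sub_le alpha theta || ~~ sub_le theta gamma) /\ g = in_f K theta beta.

Definition in_inG (K : fieldType) n d (alpha beta gamma : {set 'I_n})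
  (f : cellRing K beta) : Prop :=
  in_ideal (@inG_gen K n d alpha beta gamma) f.

Definition is_chain n (C : seq ('I_n * 'I_n)) : bool :=
  sorted ltn [seq val p.1 | p <- C] && sorted gtn [seq val p.2 | p <- C].

(* R_alpha - S_alpha <= C_(1) - C_(2) <= R_gamma - S_gamma *)
Definition chain_ok n (alpha beta gamma : {set 'I_n}) (C : seq ('I_n * 'I_n))
  : bool :=
  let C1 := [seq val p.1 | p <- C] in
  let C2 := [seq val p.2 | p <- C] in
  ms_le (sorted_entries (alpha :\: beta) ++ C2)
        (C1 ++ sorted_entries (beta :\: alpha)) &&
  ms_le (C1 ++ sorted_entries (beta :\: gamma))
        (sorted_entries (gamma :\: beta) ++ C2).

Definition chain_property n (alpha beta gamma : {set 'I_n})
  (U : seq ('I_n * 'I_n)) : Prop :=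
  forall C : seq ('I_n * 'I_n), is_chain C -> {subset C <= U} ->
    chain_ok alpha beta gamma C.

From HB Require Import structures.
From mathcomp Require Import all_boot all_order all_algebra.
From mathcomp Require Import mpoly.
From mathcomp Require Import zify.

(* The generator in(f_{theta,beta}) is the monomial x_C of the chain C pairing
   the entries r_1 < ... < r_k of theta \ beta with the entries s_k > ... > s_1
   of beta \ theta; conversely every chain C in (compl beta) x beta arises in
   this way from theta = (beta \ C_(2)) u C_(1).  Termwise comparison of
   multisets is a family of linear inequalities between the numbers of entries
   below each threshold, so the common part theta n beta cancels and
   alpha <= theta <= gamma becomes R_alpha - S_alpha <= C_(1) - C_(2) <=
   R_gamma - S_gamma.  Hence in G is the monomial ideal generated by the x_C of
   the chains violating these bounds, and x_U lies in it iff one of them divides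
   x_U, i.e. iff a violating chain lies in the support of U (a chain has no
   repeated cells).  Exponent vectors identify monomials with multisets. *)

Set Implicit Arguments.
Unset Strict Implicit.
Unset Printing Implicit Defensive.

Local Notation cnt_lt v s := (count (fun x => x < v) s).

Lemma count_lt_pointwise (a b : seq nat) v : size a = size b ->
  (forall k, k < size a -> nth 0 a k <= nth 0 b k) -> cnt_lt v b <= cnt_lt v a.
Proof.
elim: a b => [|x a IH] [|y b] //= [hs] h.
rewrite leq_add ?IH // => [|k hk]; last exact: (h k.+1).
have hxy := h 0 erefl; case: (ltnP y v) => hy //.
by rewrite (leq_ltn_trans hxy hy).
Qed.

Lemma pointwise_count_lt (a b : seq nat) : sorted leq a -> sorted leq b ->
  size a = size b -> (forall v, cnt_lt v b <= cnt_lt v a) ->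
  forall k, k < size a -> nth 0 a k <= nth 0 b k.
Proof.
move=> sa sb hs hc k hk; rewrite leqNgt; apply/negP => hba.
have hkb : k < size b by rewrite -hs.
set w := nth 0 a k in hba.
have few_a : cnt_lt w a <= k.
  rewrite -(cat_take_drop k a) count_cat.
  have /eqP -> : cnt_lt w (drop k a) == 0.
    rewrite -leqn0 leqNgt -has_count; apply/hasPn => x /(nthP 0) [j hj <-].
    rewrite size_drop in hj; rewrite nth_drop -leqNgt.
    by apply: (sorted_leq_nth leq_trans leqnn 0 sa); rewrite ?inE ?leq_addr // -ltn_subRL.
  by rewrite addn0 (leq_trans (count_size _ _)) // size_take; case: ltnP.
have many_b : k.+1 <= cnt_lt w b.
  rewrite -(cat_take_drop k.+1 b) count_cat; apply: leq_trans (leq_addr _ _).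
  have: all (fun x => x < w) (take k.+1 b).
    apply/allP => x /(nthP 0) [j]; rewrite size_takel // => hj <-.
    rewrite nth_take //; apply: leq_ltn_trans hba.
    by apply: (sorted_leq_nth leq_trans leqnn 0 sb); rewrite ?inE // (leq_trans hj).
  by rewrite all_count size_takel // => /eqP ->.
by have := hc w; lia.
Qed.

Lemma ms_le_count s t :
  ms_le s t <-> size s = size t /\ forall v, cnt_lt v t <= cnt_lt v s.
Proof.
have sortE u p : count p (sort leq u) = count p u.
  exact/permP/permEl/perm_sort.
rewrite /ms_le; split.
  case/andP => /eqP hs /forallP h; split => // v.
  rewrite -(sortE s) -(sortE t); apply: count_lt_pointwise; rewrite ?size_sort // => k hk.
  exact: (h (Ordinal hk)).
move=> [hs hc]; rewrite hs eqxx; apply/forallP => k.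
apply: pointwise_count_lt; rewrite ?size_sort ?hs ?sort_sorted //.
by move=> v; rewrite !sortE.
Qed.

Lemma ms_le_cancel (s t s' t' x y : seq nat) :
  perm_eq (s ++ x) (s' ++ y) -> perm_eq (t ++ x) (t' ++ y) ->
  ms_le s t = ms_le s' t'.
Proof.
move=> /permP ps /permP pt.
have cs v : cnt_lt v s + cnt_lt v x = cnt_lt v s' + cnt_lt v y.
  by rewrite -!count_cat ps.
have ct v : cnt_lt v t + cnt_lt v x = cnt_lt v t' + cnt_lt v y.
  by rewrite -!count_cat pt.
have zs : size s + size x = size s' + size y by rewrite -!size_cat -!count_predT ps.
have zt : size t + size x = size t' + size y by rewrite -!size_cat -!count_predT pt.
apply/idP/idP => /ms_le_count [hsz hc]; apply/ms_le_count; split; try lia;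
  by move=> v; have := hc v; have := cs v; have := ct v; lia.
Qed.

Section SortedEntries.
Variable n : nat.
Implicit Types A B T : {set 'I_n}.

Lemma perm_sorted_entries A : perm_eq (sorted_entries A) (map val (enum A)).
Proof. exact/permEl/perm_sort. Qed.

Lemma sorted_entries_ltn A : sorted ltn (sorted_entries A).
Proof.
rewrite ltn_sorted_uniq_leq (sort_sorted leq_total) andbT.
by rewrite (perm_uniq (perm_sorted_entries A)) (map_inj_uniq val_inj) enum_uniq.
Qed.

Lemma size_sorted_entries A : size (sorted_entries A) = #|A|.
Proof. by rewrite size_sort size_map cardE. Qed.

Lemma mem_sorted_entries A i : (val i \in sorted_entries A) = (i \in A).
Proof. by rewrite (perm_mem (perm_sorted_entries A)) (mem_map val_inj) mem_enum. Qed.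

Lemma sorted_entries_seq (s : seq 'I_n) : sorted ltn (map val s) ->
  sorted_entries [set i in s] = map val s.
Proof.
move=> s_ltn; have s_uniq : uniq s.
  exact/(map_uniq (f := val))/(sorted_uniq ltn_trans ltnn).
apply: (sorted_eq leq_trans anti_leq).
- exact: (sort_sorted leq_total).
- by move: s_ltn; rewrite ltn_sorted_uniq_leq => /andP [].
apply: (perm_trans (perm_sorted_entries _)); apply: perm_map.
by apply: uniq_perm => // [|i]; rewrite ?enum_uniq // mem_enum inE.
Qed.

Lemma perm_sorted_entries_setD A B :
  perm_eq (sorted_entries A ++ sorted_entries (B :\: A))
          (sorted_entries B ++ sorted_entries (A :\: B)).
Proof.
apply: (perm_trans (perm_cat (perm_sorted_entries _) (perm_sorted_entries _))).
rewrite perm_sym.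
apply: (perm_trans (perm_cat (perm_sorted_entries _) (perm_sorted_entries _))).
rewrite -!map_cat perm_sym; apply: perm_map.
have uniq_setD (C D : {set 'I_n}) : uniq (enum C ++ enum (D :\: C)).
  rewrite cat_uniq !enum_uniq andbT; apply/hasPn => i.
  by rewrite !mem_enum !inE => /andP [/negbTE ->].
apply: uniq_perm (uniq_setD A B) (uniq_setD B A) _ => i.
by rewrite !mem_cat !mem_enum !inE; case: (i \in A); case: (i \in B).
Qed.

Lemma sub_le_setD A T B :
  sub_le A T = ms_le (sorted_entries (A :\: B) ++ sorted_entries (B :\: T))
                     (sorted_entries (T :\: B) ++ sorted_entries (B :\: A)).
Proof.
apply: (ms_le_cancel (x := sorted_entries (B :\: A) ++ sorted_entries (B :\: T))
                     (y := sorted_entries B)).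
- have /permP AB := perm_sorted_entries_setD A B.
  by apply/permP => p; have := AB p; rewrite !count_cat; lia.
- have /permP TB := perm_sorted_entries_setD T B.
  by apply/permP => p; have := TB p; rewrite !count_cat; lia.
Qed.

Lemma eqn_cardsD A B : (#|A :\: B| == #|B :\: A|) = (#|A| == #|B|).
Proof. by have := cardsID B A; have := cardsID A B; rewrite setIC; lia. Qed.

End SortedEntries.

Lemma chain_uniq n (C : seq ('I_n * 'I_n)) : is_chain C -> uniq C.
Proof.
case/andP=> C1_ltn _; apply: (map_uniq (f := fun p => val p.1)).
exact: sorted_uniq ltn_trans ltnn _ C1_ltn.
Qed.

Section ChainsOfSets.
Variables (n : nat) (beta : {set 'I_n}).
Implicit Types (T : {set 'I_n}) (C : seq ('I_n * 'I_n)).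

Definition chain_of T C : Prop :=
  sorted_entries (T :\: beta) = [seq val p.1 | p <- C] /\
  sorted_entries (beta :\: T) = rev [seq val p.2 | p <- C].

Lemma chain_of_is_chain T C : chain_of T C -> is_chain C.
Proof.
move=> [C1E C2E]; rewrite /is_chain -C1E sorted_entries_ltn /=.
by rewrite -rev_sorted -C2E sorted_entries_ltn.
Qed.

Lemma chain_of_cell T C : chain_of T C -> {subset C <= cellP beta}.
Proof.
move=> [C1E C2E] p pC; rewrite inE.
have /(map_f (fun q => val q.1)) := pC; rewrite -C1E mem_sorted_entries inE.
case/andP=> -> _.
have /(map_f (fun q => val q.2)) := pC; rewrite -mem_rev -C2E mem_sorted_entries inE.
by case/andP.
Qed.

Lemma card_chain_of T C : chain_of T C -> #|T| = #|beta|.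
Proof.
move=> [C1E C2E]; apply/eqP; rewrite -eqn_cardsD -!size_sorted_entries.
by rewrite C1E C2E size_rev !size_map.
Qed.

Lemma chain_ok_chain_of alpha gamma T C : chain_of T C ->
  chain_ok alpha beta gamma C = sub_le alpha T && sub_le T gamma.
Proof.
move=> [C1E C2E].
rewrite /chain_ok (sub_le_setD alpha T beta) (sub_le_setD T gamma beta) C1E C2E.
by congr andb; apply: (ms_le_cancel (x := [::]) (y := [::]));
  rewrite !cats0 ?perm_cat2l // perm_sym perm_rev.
Qed.

Lemma in_f_chain_of (K : fieldType) T C : chain_of T C -> in_f K T beta = xU K beta C.
Proof.
move=> [C1E C2E]; rewrite /in_f /xU C1E C2E size_map.
case: C {C1E C2E} => [|c C']; first by rewrite big_ord0 big_nil.
set C := c :: C'.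
rewrite (big_nth c) big_mkord; apply: eq_bigr => i _.
have i_lt := ltn_ord i.
have i_le : i <= size C' by rewrite -ltnS.
rewrite (nth_map c) // nth_rev size_map; last by rewrite /C /= ltnS leq_subr.
have -> : size C - ((size C).-1 - i).+1 = i by rewrite /C /= subSS subKn.
by rewrite (nth_map c) // (big_pred1 (nth c C i)).
Qed.

Lemma chain_of_setP T : #|T| = #|beta| -> exists C, chain_of T C.
Proof.
move=> /eqP; rewrite -eqn_cardsD => /eqP card_setD.
pose entries (A : {set 'I_n}) := sort (relpre val leq) (enum A).
have entriesE (A : {set 'I_n}) : map val (entries A) = sorted_entries A.
  by rewrite -sort_map.
have size_entries (A : {set 'I_n}) : size (entries A) = #|A| by rewrite size_sort cardE.
set r := entries (T :\: beta); set s := rev (entries (beta :\: T)).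
have size_rs : size r = size s by rewrite size_rev !size_entries.
exists (zip r s); split.
- by rewrite -entriesE (map_comp val fst) -/(unzip1 _) unzip1_zip ?size_rs.
- rewrite -entriesE (map_comp val snd) -/(unzip2 _) unzip2_zip ?size_rs //.
  by rewrite map_rev revK.
Qed.

Definition set_of_chain C : {set 'I_n} :=
  (beta :\: [set i in map snd C]) :|: [set i in map fst C].

Lemma chain_of_set_of_chain C : is_chain C -> {subset C <= cellP beta} ->
  chain_of (set_of_chain C) C.
Proof.
move=> /andP [C1_ltn C2_gtn] C_cell; rewrite /chain_of.
have C1_out i : i \in map fst C -> i \notin beta.
  by case/mapP => p /C_cell; rewrite inE => /andP [? _] ->.
have C2_in i : i \in map snd C -> i \in beta.
  by case/mapP => p /C_cell; rewrite inE => /andP [_ ?] ->.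
have -> : set_of_chain C :\: beta = [set i in map fst C].
  apply/setP => i; rewrite !inE.
  case: (boolP (i \in map fst C)) => [/C1_out -> | _]; rewrite ?orbT ?orbF //.
  by case: (i \in beta); rewrite ?andbF.
have -> : beta :\: set_of_chain C = [set i in rev (map snd C)].
  apply/setP => i; rewrite !inE mem_rev.
  case: (boolP (i \in map snd C)) => [i_C2 | _]; last first.
    by case: (i \in beta); rewrite ?andbF.
  by rewrite C2_in // andbT; apply/negP => /C1_out; rewrite C2_in.
split; rewrite sorted_entries_seq ?map_rev -?map_comp //.
by rewrite rev_sorted.
Qed.

End ChainsOfSets.

Import GRing.Theory.
Local Open Scope ring_scope.

Section MonomialIdeal.
Variables (K : fieldType) (N : nat).

Lemma mpolyX_inj : injective (fun m : 'X_{1..N} => 'X_[m] : {mpoly K[N]}).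
Proof.
move=> a b /(congr1 (mcoeff a)) /=; rewrite !mcoeffX eqxx.
by case: (eqVneq a b) => // _ /eqP; rewrite mulr1n mulr0n oner_eq0.
Qed.

Lemma mcoeffMX_eq0 (c : {mpoly K[N]}) (g m : 'X_{1..N}) :
  ~~ (g <= m)%MM -> (c * 'X_[g])@_m = 0.
Proof.
move=> g_not_le; apply: memN_msupp_eq0; rewrite (perm_mem (msuppMX c g)).
by apply: contra g_not_le => /mapP [m' _ ->]; apply: lem_addr.
Qed.

Lemma monomial_in_idealP (S : {mpoly K[N]} -> Prop) (m : 'X_{1..N}) :
  (forall g, S g -> exists gm, g = 'X_[gm]) ->
  in_ideal S 'X_[m] <-> exists2 gm, S 'X_[gm] & (gm <= m)%MM.
Proof.
move=> S_monomial; split; last first.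
  move=> [gm Sgm gm_le]; exists [:: 'X_[gm]], [:: 'X_[m - gm]]; do !split => //.
    by move=> g; rewrite inE => /eqP ->.
  by rewrite big_ord1 /= -mpolyXD submK.
move=> [gs [cs [_ [Sgs /(congr1 (mcoeff m))]]]].
(* The coefficient of x^m is 1, so some c_i g_i has a nonzero coefficient at m,
   which forces the monomial g_i to divide x^m. *)
rewrite mcoeffX eqxx raddf_sum /=.
case: (pickP (fun i : 'I_(size gs) => (cs`_i * gs`_i)@_m != 0)) => [i nz _ | all0].
  have Sgi : S gs`_i by apply/Sgs/mem_nth.
  have [g gE] := S_monomial _ Sgi; exists g; first by rewrite -gE.
  by apply: contraTT nz; rewrite gE => /mcoeffMX_eq0 ->; rewrite eqxx.
by rewrite big1 => [/eqP|i _]; [rewrite oner_eq0 | apply/eqP/negbFE/all0].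
Qed.

End MonomialIdeal.

Section CellMonomials.
Variables (K : fieldType) (n : nat) (beta : {set 'I_n}).
Local Notation N := #|cellP beta|.
Local Notation ev := (@enum_val _ (mem (cellP beta))).
Implicit Types U V C : seq ('I_n * 'I_n).

Definition mnm_of U : 'X_{1..N} := [multinom count_mem (ev i) U | i < N].

Definition seq_of_mnm (mm : 'X_{1..N}) : seq ('I_n * 'I_n) :=
  flatten [seq nseq (mm i) (ev i) | i <- enum 'I_N].

Lemma count_mnm_of U p (p_cell : p \in cellP beta) :
  count_mem p U = mnm_of U (enum_rank_in p_cell p).
Proof. by rewrite mnmE enum_rankK_in. Qed.

Lemma mnm_of_cons p U (p_cell : p \in cellP beta) :
  mnm_of (p :: U) = (U_(enum_rank_in p_cell p) + mnm_of U)%MM.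
Proof.
apply/mnmP => i; rewrite mnmDE mnm1E !mnmE /=; congr (nat_of_bool _ + _)%N.
apply/eqP/eqP => [pE|<-]; last by rewrite enum_rankK_in.
by apply: enum_val_inj; rewrite enum_rankK_in.
Qed.

Lemma xUE U : {subset U <= cellP beta} -> xU K beta U = 'X_[mnm_of U].
Proof.
elim: U => [|p U IH] U_cell.
  by rewrite /xU big_nil -mpolyX0; congr 'X_[_]; apply/mnmP => i; rewrite !mnmE.
have p_cell : p \in cellP beta by apply: U_cell; rewrite inE eqxx.
rewrite /xU big_cons -/(xU K beta U) IH => [|q q_U]; last first.
  by apply: U_cell; rewrite inE q_U orbT.
rewrite (mnm_of_cons _ p_cell) mpolyXD /xvar (big_pred1 (enum_rank_in p_cell p)) // => i /=.
apply/eqP/eqP => [pE|->]; last by rewrite enum_rankK_in.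
by apply: enum_val_inj; rewrite enum_rankK_in.
Qed.

Lemma mdeg_mnm_of U : {subset U <= cellP beta} -> mdeg (mnm_of U) = size U.
Proof.
elim: U => [|p U IH] U_cell.
  by rewrite mdegE big1 // => i _; rewrite mnmE.
have p_cell : p \in cellP beta by apply: U_cell; rewrite inE eqxx.
rewrite (mnm_of_cons _ p_cell) mdegD mdeg1 IH // => q q_U.
by apply: U_cell; rewrite inE q_U orbT.
Qed.

Lemma perm_eq_mnm_of U V : {subset U <= cellP beta} -> {subset V <= cellP beta} ->
  mnm_of U = mnm_of V -> perm_eq U V.
Proof.
move=> U_cell V_cell UV; apply/allP => p _ /=.
case: (boolP (p \in cellP beta)) => p_cell; first by rewrite !(count_mnm_of _ p_cell) UV.
have p_U : p \notin U by apply: contra p_cell; apply: U_cell.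
have p_V : p \notin V by apply: contra p_cell; apply: V_cell.
by rewrite (count_memPn p_U) (count_memPn p_V).
Qed.

Lemma mnm_of_leP C U : uniq C -> {subset C <= cellP beta} ->
  (mnm_of C <= mnm_of U)%MM <-> {subset C <= U}.
Proof.
move=> C_uniq C_cell; split.
  move=> /mnm_lepP C_le p p_C; have p_cell := C_cell p p_C.
  rewrite -has_pred1 has_count (count_mnm_of U p_cell) (leq_trans _ (C_le _)) //.
  by rewrite -count_mnm_of -has_count has_pred1.
move=> C_U; apply/mnm_lepP => i; rewrite !mnmE count_uniq_mem //.
by case: (boolP (ev i \in C)) => //= /C_U; rewrite -has_pred1 has_count.
Qed.

Lemma seq_of_mnm_cell mm : {subset seq_of_mnm mm <= cellP beta}.
Proof. by move=> p /flattenP [s /mapP [i _ ->]] /nseqP [-> _]; apply: enum_valP. Qed.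

Lemma size_seq_of_mnm mm : size (seq_of_mnm mm) = mdeg mm.
Proof.
rewrite size_flatten /shape -map_comp mdegE sumnE big_map big_enum /=.
by apply: eq_bigr => i _; rewrite /= size_nseq.
Qed.

Lemma mnm_of_seq_of_mnm mm : mnm_of (seq_of_mnm mm) = mm.
Proof.
apply/mnmP => j; rewrite mnmE count_flatten -map_comp sumnE big_map big_enum /=.
rewrite (bigD1 j) //= count_nseq /= eqxx mul1n big1 ?addn0 // => i ij.
by rewrite count_nseq /= (inj_eq enum_val_inj) (negbTE ij) mul0n.
Qed.

End CellMonomials.

Section InitialIdeal.
Variables (K : fieldType) (n d : nat) (alpha beta gamma : {set 'I_n}).
Hypothesis card_beta : #|beta| = d.

Lemma inG_genP g :
  @inG_gen K n d alpha beta gamma g <->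
  exists C, [/\ is_chain C, {subset C <= cellP beta},
                ~~ chain_ok alpha beta gamma C & g = xU K beta C].
Proof.
split.
  move=> [T [card_T [bad ->]]].
  have [C TC] := chain_of_setP (etrans card_T (esym card_beta)).
  exists C; split; last exact: in_f_chain_of.
  - exact: chain_of_is_chain TC.
  - exact: chain_of_cell TC.
  - by rewrite (chain_ok_chain_of _ _ TC) negb_and.
move=> [C [C_chain C_cell bad ->]].
have TC := chain_of_set_of_chain C_chain C_cell.
exists (set_of_chain beta C); split; first by rewrite (card_chain_of TC).
by rewrite -negb_and -(chain_ok_chain_of _ _ TC) (in_f_chain_of _ TC).
Qed.

Lemma in_inG_xU U : {subset U <= cellP beta} ->
  @in_inG K n d alpha beta gamma (xU K beta U) <->
  exists C, [/\ is_chain C, ~~ chain_ok alpha beta gamma C & {subset C <= U}].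
Proof.
move=> U_cell; rewrite xUE // /in_inG monomial_in_idealP; last first.
  by move=> g /inG_genP [C [_ C_cell _ ->]]; exists (mnm_of beta C); rewrite xUE.
split.
  move=> [gm /inG_genP [C [C_chain C_cell bad]]]; rewrite xUE // => /mpolyX_inj ->.
  by move/(mnm_of_leP _ (chain_uniq C_chain) C_cell) => C_U; exists C.
move=> [C [C_chain bad C_U]].
have C_cell : {subset C <= cellP beta} by move=> p /C_U /U_cell.
exists (mnm_of beta C); last exact/(mnm_of_leP _ (chain_uniq C_chain) C_cell).
by apply/inG_genP; exists C; rewrite xUE.
Qed.

Lemma not_in_inG_xU U : {subset U <= cellP beta} ->
  ~ @in_inG K n d alpha beta gamma (xU K beta U) <-> chain_property alpha beta gamma U.
Proof.
move=> U_cell; rewrite in_inG_xU //; split.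
  move=> no_bad C C_chain C_U; apply/negPn/negP => bad.
  by apply: no_bad; exists C.
by move=> ok [C [C_chain bad C_U]]; rewrite ok in bad.
Qed.

End InitialIdeal.

Theorem lemma8p3 (K : fieldType) (n d : nat) (alpha beta gamma : {set 'I_n})
  (ha : #|alpha| = d) (hb : #|beta| = d) (hc : #|gamma| = d) :
  (* main equivalence, for every finite multiset U on (compl beta) x beta *)
  (forall U : seq ('I_n * 'I_n), {subset U <= cellP beta} ->
     (~ @in_inG K n d alpha beta gamma (xU K beta U) <->
      chain_property alpha beta gamma U))
  /\
  (* consequence: U |-> x_U is a bijection (multisets = seqs up to perm_eq) *)
  (forall m : nat,
     (forall U : seq ('I_n * 'I_n), {subset U <= cellP beta} -> size U = m ->
        chain_property alpha beta gamma U ->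
        exists mm : 'X_{1..#|cellP beta|},
          [/\ mdeg mm = m, xU K beta U = 'X_[mm] &
              ~ @in_inG K n d alpha beta gamma ('X_[mm] : cellRing K beta)])
   /\
     (forall U V : seq ('I_n * 'I_n),
        {subset U <= cellP beta} -> size U = m ->
        chain_property alpha beta gamma U ->
        {subset V <= cellP beta} -> size V = m ->
        chain_property alpha beta gamma V ->
        xU K beta U = xU K beta V -> perm_eq U V)
   /\
     (forall mm : 'X_{1..#|cellP beta|}, mdeg mm = m ->
        ~ @in_inG K n d alpha beta gamma ('X_[mm] : cellRing K beta) ->
        exists U : seq ('I_n * 'I_n),
          [/\ {subset U <= cellP beta}, size U = m,
              chain_property alpha beta gamma U & xU K beta U = 'X_[mm]])).
Proof.
have main := not_in_inG_xU K alpha gamma hb.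
split=> // m; split; [|split].
- move=> U U_cell <- ok; exists (mnm_of beta U).
  by rewrite mdeg_mnm_of // -xUE //; split=> //; apply/main.
- move=> U V U_cell _ _ V_cell _ _; rewrite !xUE // => /mpolyX_inj.
  exact: perm_eq_mnm_of.
- move=> mm <- not_in.
  have U_cell : {subset seq_of_mnm mm <= cellP beta} by apply: seq_of_mnm_cell.
  have UE : xU K beta (seq_of_mnm mm) = 'X_[mm] by rewrite xUE ?mnm_of_seq_of_mnm.
  by exists (seq_of_mnm mm); split; rewrite ?size_seq_of_mnm // -main // UE.
Qed.
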